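(* Let $\mu$ be a positive Borel measure on $\mathbb{C}$ with finite moments $m_{j,k}=\int_{\mathbb{C}}z^j\overline z^kd\mu(z)$, and assume the moment matrix is tri-diagonal, i.e. $m_{j,k}=0$ whenever $|j-k|\ge2$. Let $\widehat m_{j,k}=\operatorname{Re}m_{j,k}$, $g_{j,k}=2(\widehat m_{j+1,k}-\widehat m_{j,k+1})$, $G_k=(g_{i,j})_{i,j=0}^{2k-1}$, $\Delta_{-1}=1$, $\Delta_k=\mathrm{Pf}(G_{k+1})$ for $k\ge0$ (assumed nonzero), and $\mathcal Z_j=\frac12\frac{\Delta_{j-1}}{\Delta_{j-2}}$ for $j\ge1$. Then monic skew-orthogonal polynomials with respect to the skew-product $\langle f,g\rangle_s=\int_{\mathbb{C}}(f(z)\overline{g(z)}-g(z)\overline{f(z)})(z-\overline z)d\mu(z)$ are given by $q_{2k}(z)=\sum_{j=0}^{2k}\alpha_{2k,j}z^j$, $q_{2k+1}(z)=\sum_{j=0}^{2k+1}\beta_{2k+1,j}z^j$ with $\alpha_{2k,2k}=1$, $\beta_{2k+1,2k+1}=1$, $\beta_{2k+1,2k}=\beta_{2k+1,2k-1}=0$, and the remaining coefficients determined by, for $j=1,2,\dots,k$ (with the convention $\alpha_{2k,2k+1}=0$): $$\mathcal Z_j\alpha_{2k,2j-1}=-\widehat m_{2j-1,2j}\alpha_{2k,2j},\qquad\mathcal Z_j\alpha_{2k,2j-2}=\widehat m_{2j,2j+1}\alpha_{2k,2j+1}+\widehat m_{2j,2j}\alpha_{2k,2j},$$ $$\mathcal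 Z_j\beta_{2k+1,2j-1}=-\widehat m_{2j-1,2j}\beta_{2k+1,2j},\qquad\mathcal Z_j\beta_{2k+1,2j-2}=\widehat m_{2j,2j+1}\beta_{2k+1,2j+1}+\widehat m_{2j,2j}\beta_{2k+1,2j}.$$
   Context: Polynomials $(q_k)_{k\ge0}$ with $\deg q_k=k$ are skew-orthogonal if $\langle q_{2k},q_{2\ell}\rangle_s=\langle q_{2k+1},q_{2\ell+1}\rangle_s=0$ and $\langle q_{2k},q_{2\ell+1}\rangle_s=-\langle q_{2\ell+1},q_{2k}\rangle_s=r_k\delta_{k,\ell}$; monic means leading coefficient $1$. $\mathrm{Pf}$ denotes the Pfaffian of an antisymmetric matrix. *)

From HB Require Import structures.
From mathcomp Require Import all_boot all_order all_algebra all_fingroup.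
From mathcomp Require Import all_classical all_reals all_analysis.
From mathcomp Require Import complex.

Set Implicit Arguments.
Unset Strict Implicit.
Unset Printing Implicit Defensive.

Import Order.TTheory GRing.Theory Num.Theory.
Local Open Scope ring_scope.

Lemma pf_ev_proof n (i : 'I_n) : (i.*2 < n.*2)%N.
Proof. by rewrite ltn_double ltn_ord. Qed.

Lemma pf_od_proof n (i : 'I_n) : (i.*2.+1 < n.*2)%N.
Proof. by rewrite -[(i.*2.+1 < _)%N]/(i.+1.*2 <= n.*2)%N leq_double ltn_ord. Qed.

Definition pf_ev n (i : 'I_n) : 'I_(n.*2) := Ordinal (pf_ev_proof i).
Definition pf_od n (i : 'I_n) : 'I_(n.*2) := Ordinal (pf_od_proof i).

Definition pfaffian (F : fieldType) (n : nat) (A : 'M[F]_(n.*2)) : F :=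
  ((2 ^ n * n`!)%:R)^-1 *
  \sum_(s : 'S_(n.*2)) (-1) ^+ s * \prod_(i < n) A (s (pf_ev i)) (s (pf_od i)).

Section Moments.
Variable R : realType.
Variable mu : {measure set (R * R)%type -> \bar R}.

(* the point z = x + i y of C identified with (x, y) in R x R *)
Definition zc (p : R * R) : R[i] := Complex p.1 p.2.

Definition cintegral (F : R * R -> R[i]) : R[i] :=
  Complex (fine (\int[mu]_p (complex.Re (F p))%:E))
          (fine (\int[mu]_p (complex.Im (F p))%:E)).

Definition moment (j k : nat) : R[i] :=
  cintegral (fun p => zc p ^+ j * (zc p)^* ^+ k).

Definition mhat (j k : nat) : R := complex.Re (moment j k).

Definition gcoef (j k : nat) : R := 2 * (mhat j.+1 k - mhat j k.+1).

Definition Gmat (n : nat) : 'M[R]_(n.*2) := \matrix_(i, j) gcoef i j.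

(* DeltaS n = Pf(G_n) = Delta_{n-1}; so Delta_k = DeltaS k.+1, Delta_{-1} = DeltaS 0 = 1 *)
Definition DeltaS (n : nat) : R := pfaffian (Gmat n).

(* Z_j = 1/2 * Delta_{j-1} / Delta_{j-2}  (j >= 1) *)
Definition Zc (j : nat) : R := 2^-1 * (DeltaS j / DeltaS j.-1).

Definition skew_prod (f g : {poly R[i]}) : R[i] :=
  cintegral (fun p => let z := zc p in
    (f.[z] * (g.[z])^* - g.[z] * (f.[z])^*) * (z - z^*)).

End Moments.

Definition rC (R : rcfType) (x : R) : R[i] := Complex x 0.

From HB Require Import structures.
From mathcomp Require Import all_boot all_order all_algebra all_fingroup.
From mathcomp Require Import all_classical all_reals all_analysis.
From mathcomp Require Import complex.
From mathcomp Require Import zify ring lra.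
Set Implicit Arguments.
Unset Strict Implicit.
Unset Printing Implicit Defensive.

Import Order.TTheory GRing.Theory Num.Theory.
Local Open Scope ring_scope.

(** For real coefficient vectors c and c', the skew product of the polynomials
    sum_i c_i z^i and sum_j c'_j z^j is the bilinear form c^T G c', because
    (z^i zbar^j - z^j zbar^i)(z - zbar) = 2 Re (z^(i+1) zbar^j - z^i zbar^(j+1)).
    The recurrences have real coefficients and real top values, so the imaginary
    parts of alpha and beta solve a homogeneous triangular system and vanish.
    As the moment matrix is tridiagonal, G is pentadiagonal, and expanding its
    Pfaffian along the last column gives
    Delta_(j+1) = 2 mhat_(2j+3,2j+3) Delta_j - 4 mhat_(2j+1,2j+2) mhat_(2j+2,2j+3) Delta_(j-1),
    that is Z_(j+1) Z_j = mhat_(2j+1,2j+1) Z_j - mhat_(2j-1,2j) mhat_(2j,2j+1).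
    With this identity the recurrences say exactly that the coefficient vectors
    of q_(2k) and q_(2k+1) annihilate the first 2k columns of G; skew-orthogonality
    for k <> l follows by antisymmetry of G. *)

Lemma tperm_map (T T' : finType) (f : T -> T') (x y z : T) : injective f ->
  tperm (f x) (f y) (f z) = f (tperm x y z).
Proof.
move=> inj_f; case: (tpermP x y z) => [->|->|/eqP nzx /eqP nzy]; rewrite ?tpermL ?tpermR //.
by rewrite tpermD // inj_eq // eq_sym.
Qed.

Lemma pf_ev_inj n : injective (@pf_ev n).
Proof. by move=> i j /(congr1 val)/double_inj/val_inj. Qed.

Lemma pf_od_inj n : injective (@pf_od n).
Proof. by move=> i j [/double_inj/val_inj]. Qed.

Lemma pf_ev_neq_od n (i j : 'I_n) : pf_ev i != pf_od j.
Proof. by apply/eqP => /(congr1 (fun k : 'I_ _ => odd k)); rewrite /= !odd_double. Qed.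

Lemma pf_ev_or_od n (p : 'I_(n.*2)) : exists i : 'I_n, p = pf_ev i \/ p = pf_od i.
Proof.
have hp : (p./2 < n)%N by rewrite ltn_half_double.
exists (Ordinal hp); case Op: (odd p); [right|left]; apply: val_inj => /=;
  by rewrite -[in LHS](odd_double_half p) Op.
Qed.

Section PfaffianSum.
Variable F : fieldType.

Lemma big_lift_perm n (i j : 'I_n.+1) (H : 'S_n.+1 -> F) :
  \sum_(s : 'S_n.+1 | s i == j) H s = \sum_(s : 'S_n) H (lift_perm i j s).
Proof.
pose down (s : 'S_n.+1) k := odflt k (unlift (s i) (s (lift i k))).
have downK (s : 'S_n.+1) k : lift (s i) (down s k) = s (lift i k).
  have : s i != s (lift i k) by rewrite (inj_eq perm_inj) neq_lift.
  by case/unlift_some => k' sk e; rewrite /down e sk.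
have down_inj (s : 'S_n.+1) : injective (down s).
  by move=> k1 k2 /(congr1 (lift (s i))); rewrite !downK => /perm_inj/lift_inj.
rewrite (reindex (lift_perm i j)) /=; first by apply: eq_bigl => s; rewrite lift_perm_id eqxx.
exists (fun s => perm (down_inj s)) => [s _ | s /eqP si].
  apply/permP => k; apply: (@lift_inj _ (lift_perm i j s i)).
  by rewrite [X in lift _ X = _]permE downK lift_perm_lift lift_perm_id.
apply/permP => k; case: (unliftP i k) => [k'|] ->; last by rewrite lift_perm_id si.
by rewrite lift_perm_lift permE -si downK.
Qed.

Lemma big_perm_at_invariant N (G : 'S_N -> F) (g : 'S_N) x w :
  (forall s, G (g * s)%g = G s) ->
  \sum_(s : 'S_N | s x == w) G s = \sum_(s : 'S_N | s (g x) == w) G s.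
Proof.
move=> GgE; rewrite (reindex_inj (mulgI g)).
by apply: eq_big => s; rewrite ?permM ?GgE.
Qed.

Definition pf_term n (A : nat -> nat -> F) (s : 'S_(n.*2)) : F :=
  (-1) ^+ s * \prod_(i < n) A (s (pf_ev i)) (s (pf_od i)).

Definition pf_sum n (A : nat -> nat -> F) : F := \sum_(s : 'S_(n.*2)) pf_term A s.

Lemma pfaffian_pf_sum n (A : nat -> nat -> F) :
  pfaffian (\matrix_(i < n.*2, j < n.*2) A i j) = ((2 ^ n * n`!)%:R)^-1 * pf_sum n A.
Proof.
congr (_ * _); apply: eq_bigr => s _; congr (_ * _).
by apply: eq_bigr => i _; rewrite !mxE.
Qed.

Lemma eq_pf_sum n (A B : nat -> nat -> F) :
  {in gtn n.*2 &, A =2 B} -> pf_sum n A = pf_sum n B.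
Proof.
move=> eqAB; apply: eq_bigr => s _; congr (_ * _).
by apply: eq_bigr => i _; rewrite eqAB // inE.
Qed.

Lemma pf_sum0 (A : nat -> nat -> F) : pf_sum 0 A = 1.
Proof.
rewrite /pf_sum (big_pred1 1%g) => [|s]; last by apply/esym/eqP/permP => -[].
by rewrite /pf_term odd_perm1 big_ord0 mulr1.
Qed.

Variable A : nat -> nat -> F.
Hypothesis A_skew : forall x y, A x y = - A y x.

Lemma pf_term_swap_in_pair n (i : 'I_n) s :
  pf_term A (tperm (pf_ev i) (pf_od i) * s) = pf_term A s.
Proof.
rewrite /pf_term odd_permM odd_tperm pf_ev_neq_od signr_addb expr1 mulN1r.
rewrite (bigD1 i) //= [in RHS](bigD1 i) //= !permM tpermL tpermR A_skew.
rewrite !mulNr mulrN opprK; congr (_ * (_ * _)); apply: eq_bigr => j nji.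
have ne_ev : pf_ev i != pf_ev j by rewrite (inj_eq (@pf_ev_inj n)) eq_sym.
have ne_od : pf_od i != pf_od j by rewrite (inj_eq (@pf_od_inj n)) eq_sym.
by rewrite !permM !tpermD // ?pf_ev_neq_od // eq_sym pf_ev_neq_od.
Qed.

Lemma pf_term_swap_pairs n (i k : 'I_n) s : i != k ->
  pf_term A (tperm (pf_ev i) (pf_ev k) * tperm (pf_od i) (pf_od k) * s) = pf_term A s.
Proof.
move=> nik; set g := (tperm _ _ * tperm _ _)%g.
have g_ev j : g (pf_ev j) = pf_ev (tperm i k j).
  by rewrite permM (tperm_map i k j (@pf_ev_inj n)) tpermD // eq_sym pf_ev_neq_od.
have g_od j : g (pf_od j) = pf_od (tperm i k j).
  by rewrite permM (tpermD (pf_ev_neq_od _ _) (pf_ev_neq_od _ _)) tperm_map //; exact: pf_od_inj.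
rewrite /pf_term odd_permM [odd_perm g]odd_permM !odd_tperm.
rewrite (inj_eq (@pf_ev_inj n)) (inj_eq (@pf_od_inj n)) nik addbb addFb.
congr (_ * _); rewrite [RHS](reindex_inj (@perm_inj _ (tperm i k))) /=.
by apply: eq_bigr => j _; rewrite !(permM g) g_ev g_od.
Qed.

(* The 2(m+1) possible preimages of the last index contribute equally:
   swapping the two entries of a pair, or two whole pairs, fixes [pf_term]. *)
Lemma pf_sum_fix_last m :
  pf_sum m.+1 A = (m.+1.*2)%:R *
    \sum_(s : 'S_(m.+1.*2) | s (pf_od ord_max) == pf_od ord_max) pf_term A s.
Proof.
set w := pf_od ord_max.
have at_od (i : 'I_m.+1) :
    \sum_(s : 'S_(m.+1.*2) | s (pf_od i) == w) pf_term A s =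
    \sum_(s : 'S_(m.+1.*2) | s w == w) pf_term A s.
  have [->|nim] := eqVneq i ord_max; first by [].
  rewrite (big_perm_at_invariant _ _ (fun s => pf_term_swap_pairs s nim)) permM.
  by rewrite (tpermD (pf_ev_neq_od _ _) (pf_ev_neq_od _ _)) tpermL.
have at_w (p : 'I_(m.+1.*2)) :
    \sum_(s : 'S_(m.+1.*2) | s p == w) pf_term A s =
    \sum_(s : 'S_(m.+1.*2) | s w == w) pf_term A s.
  have [i [->|->]] := pf_ev_or_od p; rewrite -(at_od i) //.
  by rewrite (big_perm_at_invariant _ _ (pf_term_swap_in_pair i)) tpermL.
transitivity (\sum_(s : 'S_(m.+1.*2)) \sum_(p : 'I_(m.+1.*2) | s p == w) pf_term A s).
  apply: eq_bigr => s _; rewrite (big_pred1 (s^-1 w)%g) // => p.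
  by rewrite /= (can2_eq (permK s) (permKV s)).
rewrite (exchange_big_dep xpredT) //= (eq_bigr _ (fun p _ => at_w p)).
by rewrite sumr_const card_ord mulr_natl.
Qed.

Lemma pf_term_lift_perm m (v : 'I_(m.*2.+1)) (s : 'S_(m.*2)) :
  pf_term (n := m.+1) A (lift_perm ord_max ord_max (lift_perm ord_max v s)) =
  (-1) ^+ v * A v (m.*2.+1) * pf_term (fun x y => A (bump v x) (bump v y)) s.
Proof.
set t := lift_perm _ _ _.
have lift_maxE n (k : 'I_n) : val (lift ord_max k) = val k by rewrite /= /bump leqNgt ltn_ord.
have tE (k : 'I_(m.*2)) : val (t (lift ord_max (lift ord_max k))) = bump v (s k).
  by rewrite !lift_perm_lift lift_maxE.
have ev_widen (i : 'I_m) : pf_ev (widen_ord (leqnSn m) i) =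
    lift ord_max (lift ord_max (pf_ev i)) :> 'I_(m.*2.+2).
  by apply: val_inj; rewrite !lift_maxE.
have od_widen (i : 'I_m) : pf_od (widen_ord (leqnSn m) i) =
    lift ord_max (lift ord_max (pf_od i)) :> 'I_(m.*2.+2).
  by apply: val_inj; rewrite !lift_maxE.
have t_od : t (pf_od (@ord_max m)) = ord_max.
  by rewrite (_ : pf_od (@ord_max m) = ord_max :> 'I_(m.*2.+2)) ?lift_perm_id //; apply: val_inj.
have t_ev : t (pf_ev (@ord_max m)) = lift ord_max v.
  rewrite (_ : pf_ev (@ord_max m) = lift ord_max ord_max :> 'I_(m.*2.+2)); last first.
    by apply: val_inj; rewrite lift_maxE.
  by rewrite lift_perm_lift lift_perm_id.
rewrite /pf_term !odd_lift_perm addbb /= odd_double /= signr_addb signr_odd.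
rewrite big_ord_recr /= t_od t_ev lift_maxE.
rewrite (eq_bigr (fun i => A (bump v (s (pf_ev i))) (bump v (s (pf_od i))))); last first.
  by move=> i _; rewrite ev_widen od_widen !tE.
by rewrite -!mulrA; congr (_ * _); rewrite mulrCA mulrC -mulrA [RHS]mulrCA.
Qed.

Lemma pf_sum_expand m :
  pf_sum m.+1 A = (m.+1.*2)%:R * \sum_(v < m.*2.+1)
     (-1) ^+ v * A v (m.*2.+1) * pf_sum m (fun x y => A (bump v x) (bump v y)).
Proof.
rewrite pf_sum_fix_last (_ : pf_od ord_max = ord_max); last exact: val_inj.
congr (_ * _); rewrite (big_lift_perm (n := m.*2.+1)).
rewrite (partition_big (fun s : 'S_(m.*2.+1) => s ord_max) xpredT) //=.
apply: eq_bigr => v _; rewrite big_lift_perm /pf_sum big_distrr /=.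
by apply: eq_bigr => s _; rewrite pf_term_lift_perm.
Qed.

End PfaffianSum.

Lemma sign_double (F : pzRingType) n : (-1) ^+ n.*2 = 1 :> F.
Proof. by rewrite -signr_odd odd_double. Qed.

Lemma bump_lt h i : (i < h)%N -> bump h i = i.
Proof. by move=> lt_ih; rewrite /bump leqNgt lt_ih. Qed.

Lemma bump_ge h i : (h <= i)%N -> bump h i = i.+1.
Proof. by move=> le_hi; rewrite /bump le_hi. Qed.

Section PfaffianSumExpand.
Variable F : fieldType.
Variable A : nat -> nat -> F.
Hypothesis A_skew : forall x y, A x y = - A y x.

Lemma pf_sum_expand_from m c :
  (forall v, (v < c)%N -> A v (m.*2.+1) = 0) ->
  pf_sum m.+1 A = (m.+1.*2)%:R * \sum_(c <= v < m.*2.+1)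
     (-1) ^+ v * A v (m.*2.+1) * pf_sum m (fun x y => A (bump v x) (bump v y)).
Proof.
move=> A0; rewrite (pf_sum_expand A_skew) big_geq_mkord.
rewrite (bigID (fun v : 'I_ _ => (c <= v)%N)) /= [X in _ + X]big1 ?addr0 // => v.
by rewrite -ltnNge => /A0->; rewrite mulr0 mul0r.
Qed.

End PfaffianSumExpand.

Section BandPfaffianSumRec.
Variable F : fieldType.
Variable A : nat -> nat -> F.
Hypothesis A_skew : forall x y, A x y = - A y x.
Hypothesis A_band : forall x y, (x + 3 <= y)%N -> A x y = 0.

Lemma pf_sum_band_rec n :
  pf_sum n.+2 A = (n.+2.*2)%:R * (A (n.*2.+2) (n.*2.+3) * pf_sum n.+1 A -
     A (n.*2.+1) (n.*2.+3) * ((n.+1.*2)%:R * (A (n.*2) (n.*2.+2) * pf_sum n A))).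
Proof.
rewrite (@pf_sum_expand_from _ _ A_skew _ n.*2.+1) => [|v lt_v]; last by rewrite A_band //; lia.
rewrite big_ltn // big_ltn // big_geq // addr0 doubleS.
rewrite !exprS sign_double mulr1 mulrN1 opprK mul1r mulN1r mulNr addrC.
congr (_ * (_ - _)).
  by congr (_ * _); apply: eq_pf_sum => x y; rewrite !inE doubleS => /bump_lt-> /bump_lt->.
congr (_ * _); set B := fun x y => _.
have B_skew x y : B x y = - B y x by rewrite /B A_skew.
rewrite (@pf_sum_expand_from _ _ B_skew n n.*2) // => [|v lt_v]; last first.
  by rewrite /B bump_lt ?(ltn_trans lt_v) // bump_ge // A_band //; lia.
rewrite big_ltn // big_geq // addr0 sign_double mul1r /B.
rewrite (bump_lt (ltnSn _)) bump_ge //; congr (_ * (_ * _)).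
apply: eq_pf_sum => x y; rewrite !inE => lt_x lt_y.
by rewrite (bump_lt lt_x) (bump_lt lt_y) !bump_lt // ltnW.
Qed.

End BandPfaffianSumRec.

Section BandPfaffian.
Variable F : numFieldType.
Variable A : nat -> nat -> F.
Hypothesis A_skew : forall x y, A x y = - A y x.

Local Notation Pf n := (pfaffian (\matrix_(i < n.*2, j < n.*2) A i j)).

Lemma pfaffian_nat0 : Pf 0 = 1.
Proof. by rewrite pfaffian_pf_sum pf_sum0 invr1 mulr1. Qed.

Lemma pfaffian_nat1 : Pf 1 = A 0 1.
Proof.
rewrite pfaffian_pf_sum (pf_sum_expand A_skew) big_ord1 pf_sum0 /=.
by rewrite expr0 !mul1r mulr1 mulKf ?pnatr_eq0.
Qed.

Hypothesis A_band : forall x y, (x + 3 <= y)%N -> A x y = 0.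

Lemma pfaffian_band_rec n :
  Pf n.+2 = A (n.*2.+2) (n.*2.+3) * Pf n.+1 - A (n.*2.+1) (n.*2.+3) * A (n.*2) (n.*2.+2) * Pf n.
Proof.
have cS k : (2 ^ k.+1 * k.+1`!)%:R = (k.+1.*2)%:R * (2 ^ k * k`!)%:R :> F.
  by rewrite -natrM expnS factS -mul2n; congr _%:R; ring.
have c_neq0 k : (2 ^ k * k`!)%:R != 0 :> F.
  by rewrite pnatr_eq0 -lt0n muln_gt0 expn_gt0 fact_gt0.
have d_neq0 k : (k.+1.*2)%:R != 0 :> F by rewrite pnatr_eq0 double_eq0.
rewrite !pfaffian_pf_sum (pf_sum_band_rec A_skew A_band) !cS.
move: (c_neq0 n) (d_neq0 n) (d_neq0 n.+1).
move: (2 ^ n * n`!)%:R (n.+1.*2)%:R (n.+2.*2)%:R => c a b c0 a0 b0.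
by field; rewrite c0 a0 b0.
Qed.

End BandPfaffian.

Section ComplexMeasurable.
Context d (T : measurableType d) (R : realType).

Definition cmeasurable (f : T -> R[i]) :=
  measurable_fun setT (fun x => complex.Re (f x)) /\
  measurable_fun setT (fun x => complex.Im (f x)).

Lemma cmeasurable_cst (w : R[i]) : cmeasurable (fun=> w).
Proof. by split; exact: measurable_cst. Qed.

Lemma cmeasurableM (f g : T -> R[i]) :
  cmeasurable f -> cmeasurable g -> cmeasurable (fun x => f x * g x).
Proof.
move=> [fR fI] [gR gI]; split.
- rewrite (_ : (fun x => _) = fun x => complex.Re (f x) * complex.Re (g x) -
      complex.Im (f x) * complex.Im (g x)); last by apply/funext => x; case: (f x) (g x) => [? ?] [? ?].
  by apply: measurable_realfun.measurable_funB; apply: measurable_realfun.measurable_funM.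
- rewrite (_ : (fun x => _) = fun x => complex.Re (f x) * complex.Im (g x) +
      complex.Im (f x) * complex.Re (g x)); last by apply/funext => x; case: (f x) (g x) => [? ?] [? ?].
  by apply: measurable_realfun.measurable_funD; apply: measurable_realfun.measurable_funM.
Qed.

Lemma cmeasurableX (f : T -> R[i]) n : cmeasurable f -> cmeasurable (fun x => f x ^+ n).
Proof.
move=> mf; elim: n => [|n IH].
  by under eq_fun do rewrite expr0; exact: cmeasurable_cst.
by under eq_fun do rewrite exprS; exact: cmeasurableM.
Qed.

Lemma cmeasurable_conj (f : T -> R[i]) : cmeasurable f -> cmeasurable (fun x => (f x)^*).
Proof.
move=> [fR fI]; split.
  by rewrite (_ : (fun x => _) = fun x => complex.Re (f x)) //; apply/funext => x; case: (f x).
rewrite (_ : (fun x => _) = fun x => - complex.Im (f x)); last by apply/funext => x; case: (f x).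
exact: measurable_realfun.measurable_funN.
Qed.

End ComplexMeasurable.

Section RealIntegralSum.
Context d (T : measurableType d) (R : realType).
Variables (mu : {measure set T -> \bar R}) (D : set T).
Hypothesis mD : measurable D.

Lemma integrable_Rsum I (s : seq I) (f : I -> T -> R) :
  (forall i, mu.-integrable D (EFin \o f i)) ->
  mu.-integrable D (EFin \o (fun x => \sum_(i <- s) f i x)).
Proof.
move=> intf; rewrite (_ : _ \o _ = fun x => (\sum_(i <- s) (f i x)%:E)%E).
  by apply: (integrable_sum mD) => i _; exact: intf.
by apply/funext => x; rewrite /= sumEFin.
Qed.

Lemma Rintegral_sum I (s : seq I) (f : I -> T -> R) :
  (forall i, mu.-integrable D (EFin \o f i)) ->
  \int[mu]_(x in D) (\sum_(i <- s) f i x) = \sum_(i <- s) \int[mu]_(x in D) f i x.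
Proof.
move=> intf; elim: s => [|i s IH].
  by under eq_Rintegral do rewrite big_nil; rewrite Rintegral_cst // mul0r big_nil.
under eq_Rintegral do rewrite big_cons.
by rewrite RintegralD ?IH ?big_cons //; exact: integrable_Rsum.
Qed.

End RealIntegralSum.

Section RealToComplex.
Variable R : rcfType.

Lemma rCM (x y : R) : rC (x * y) = rC x * rC y.
Proof. exact: (rmorphM (real_complex R)). Qed.

Lemma rCN (x : R) : rC (- x) = - rC x.
Proof. exact: (rmorphN (real_complex R)). Qed.

Lemma rC_sum I (s : seq I) (F : I -> R) : rC (\sum_(i <- s) F i) = \sum_(i <- s) rC (F i).
Proof. exact: (rmorph_sum (real_complex R)). Qed.

Lemma conj_rC (x : R) : (rC x)^* = rC x.
Proof. exact: conjc_real. Qed.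

End RealToComplex.

Section SkewProductOfRealPolynomials.
Variable R : realType.
Variable mu : {measure set (R * R)%type -> \bar R}.

Definition zmonomial (a b : nat) (p : R * R) : R[i] := zc p ^+ a * (zc p)^* ^+ b.

Lemma conj_zmonomial a b p : (zmonomial a b p)^* = zmonomial b a p.
Proof. by rewrite /zmonomial rmorphM !rmorphXn /= conjCK mulrC. Qed.

Lemma mhat_sym j k : mhat mu j k = mhat mu k j.
Proof.
rewrite /mhat /moment /cintegral /=; congr fine; apply: eq_integral => p _.
by rewrite -/(zmonomial j k p) -/(zmonomial k j p) -conj_zmonomial; case: (zmonomial k j p).
Qed.

Lemma cmeasurable_zmonomial a b : cmeasurable (zmonomial a b).
Proof.
have mz : cmeasurable (@zc R) by split; [exact: measurable_fst | exact: measurable_snd].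
by apply: cmeasurableM; apply: cmeasurableX => //; exact: cmeasurable_conj.
Qed.

Lemma Re_zmonomial_le a b p :
  `|complex.Re (zmonomial a b p)| <= Num.sqrt (p.1 ^+ 2 + p.2 ^+ 2) ^+ (a + b).
Proof.
rewrite -lecR (le_trans (normc_ge_Re _)) // /zmonomial normrM !normrX normcJ -exprD.
by rewrite normc_def rmorphXn.
Qed.

Hypothesis finite_moments : forall n : nat,
  mu.-integrable setT (fun p : R * R => ((Num.sqrt (p.1 ^+ 2 + p.2 ^+ 2)) ^+ n)%:E).

Lemma integrable_Re_zmonomial a b :
  mu.-integrable setT (EFin \o (fun p => complex.Re (zmonomial a b p))).
Proof.
apply: le_integrable (finite_moments (a + b)) => //.
  by apply/measurable_realfun.measurable_EFinP; exact: (cmeasurable_zmonomial a b).1.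
by move=> p _ /=; rewrite lee_fin [X in _ <= X]ger0_norm ?Re_zmonomial_le.
Qed.

Definition real_poly (c : nat -> R) (N : nat) : {poly R[i]} := \sum_(i < N) rC (c i) *: 'X^i.

Definition gform (c c' : nat -> R) (N M : nat) : R :=
  \sum_(i < N) \sum_(j < M) c i * c' j * gcoef mu i j.

Lemma horner_real_poly c N z : (real_poly c N).[z] = \sum_(i < N) rC (c i) * z ^+ i.
Proof. by rewrite horner_sum; apply: eq_bigr => i _; rewrite hornerZ hornerXn. Qed.

Lemma conj_horner_real_poly c N z :
  ((real_poly c N).[z])^* = \sum_(i < N) rC (c i) * z^* ^+ i.
Proof.
rewrite horner_real_poly rmorph_sum; apply: eq_bigr => i _.
by rewrite rmorphM rmorphXn /= conj_rC.
Qed.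

Definition gterm (i j : nat) (p : R * R) : R :=
  2 * (complex.Re (zmonomial i.+1 j p) - complex.Re (zmonomial i j.+1 p)).

Lemma zmonomial_skew_term i j p :
  (zmonomial i j p - zmonomial j i p) * (zc p - (zc p)^*) = rC (gterm i j p).
Proof.
have mulz a b : zmonomial a b p * zc p = zmonomial a.+1 b p.
  by rewrite /zmonomial mulrAC -exprSr.
have mulzJ a b : zmonomial a b p * (zc p)^* = zmonomial a b.+1 p.
  by rewrite /zmonomial -mulrA -exprSr.
rewrite mulrBl !mulrBr !mulz !mulzJ -[zmonomial j.+1 i p]conj_zmonomial.
rewrite -[zmonomial j i.+1 p]conj_zmonomial /gterm.
by case: (zmonomial i.+1 j p) => a b; case: (zmonomial i j.+1 p) => c d /=; congr Complex; ring.
Qed.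

Lemma skew_integrand_real_poly c c' N M p :
  let z := zc p in
  ((real_poly c N).[z] * ((real_poly c' M).[z])^* -
   (real_poly c' M).[z] * ((real_poly c N).[z])^*) * (z - z^*) =
  rC (\sum_(i < N) \sum_(j < M) c i * c' j * gterm i j p).
Proof.
rewrite /= !conj_horner_real_poly !horner_real_poly !big_distrlr /=.
rewrite [X in _ - X]exchange_big -sumrB mulr_suml rC_sum; apply: eq_bigr => i _.
rewrite -sumrB mulr_suml rC_sum; apply: eq_bigr => j _.
by rewrite (rCM (c i * c' j)) rCM -zmonomial_skew_term /zmonomial; ring.
Qed.

Lemma integrable_Re_zmonomialB a b a' b' : mu.-integrable setT
  (EFin \o (fun p => complex.Re (zmonomial a b p) - complex.Re (zmonomial a' b' p))).
Proof. exact: integrableB (integrable_Re_zmonomial a b) (integrable_Re_zmonomial a' b'). Qed.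

Lemma integrable_gterm i j : mu.-integrable setT (EFin \o gterm i j).
Proof. exact (integrableZl measurableT 2 (integrable_Re_zmonomialB i.+1 j i j.+1)). Qed.

Lemma Rintegral_gterm i j : \int[mu]_p gterm i j p = gcoef mu i j.
Proof.
by rewrite RintegralZl ?RintegralB //;
  [exact: integrable_Re_zmonomial.. | exact: integrable_Re_zmonomialB].
Qed.

Lemma skew_prod_real_poly c c' N M :
  skew_prod mu (real_poly c N) (real_poly c' M) = rC (gform c c' N M).
Proof.
rewrite /skew_prod; under eq_fun do rewrite skew_integrand_real_poly.
rewrite /cintegral /= integral0 /=; congr Complex; rewrite -/(Rintegral _ _ _).
have intZ i j k : mu.-integrable setT (EFin \o (fun p => k * gterm i j p)).
  exact: integrableZl (integrable_gterm i j).
rewrite Rintegral_sum //; last by move=> i; apply: (integrable_Rsum measurableT) => j; exact: intZ.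
apply: eq_bigr => i _; rewrite Rintegral_sum; last 2 first.
- exact: measurableT.
- by move=> j; exact: intZ.
apply: eq_bigr => j _.
by rewrite RintegralZl ?Rintegral_gterm //; exact: integrable_gterm.
Qed.

End SkewProductOfRealPolynomials.

Lemma big_ord_support (V : nmodType) N m k (F : nat -> V) :
  (m + k <= N)%N -> (forall a, (a < m)%N || (m + k <= a)%N -> F a = 0) ->
  \sum_(a < N) F a = \sum_(i < k) F (i + m)%N.
Proof.
move=> le_N F0; have le_m : (m <= m + k)%N := leq_addr k m.
rewrite -(big_mkord xpredT F) (big_cat_nat (leq0n m) (leq_trans le_m le_N)).
rewrite (big_cat_nat le_m le_N) /= [X in X + _]big1_seq ?add0r => [|a]; last first.
  by rewrite mem_iota subn0 => /and3P[_ _ lt_am]; rewrite F0 ?lt_am.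
rewrite [X in _ + X]big1_seq ?addr0 => [|a]; last first.
  by rewrite mem_iota => /and3P[_ le_a _]; rewrite F0 ?le_a ?orbT.
by rewrite -{1}[m]add0n big_addn addKn big_mkord.
Qed.

Section TridiagonalMoments.
Variable R : realType.
Variable mu : {measure set (R * R)%type -> \bar R}.

Lemma gcoef_skew x y : gcoef mu x y = - gcoef mu y x.
Proof. by rewrite /gcoef (mhat_sym mu x.+1 y) (mhat_sym mu x y.+1) -mulrN opprB. Qed.

Lemma gcoef_diag x : gcoef mu x x = 0.
Proof. by have := gcoef_skew x x; lra. Qed.

Lemma gform_skew (c c' : nat -> R) N M : gform mu c c' N M = - gform mu c' c M N.
Proof.
rewrite /gform exchange_big -sumrN; apply: eq_bigr => j _.
by rewrite -sumrN; apply: eq_bigr => i _; rewrite gcoef_skew; ring.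
Qed.

Lemma gform_self (c : nat -> R) N : gform mu c c N N = 0.
Proof. by have := gform_skew c c N N; lra. Qed.

Lemma gform_col_zero (c c' : nat -> R) N M :
  (forall b, (b < M)%N -> \sum_(a < N) c a * gcoef mu a b = 0) -> gform mu c c' N M = 0.
Proof.
move=> col0; rewrite /gform exchange_big big1 // => j _.
rewrite (eq_bigr (fun i : 'I_N => c' j * (c i * gcoef mu i j))) => [|i _]; last by ring.
by rewrite -mulr_sumr col0 ?mulr0.
Qed.

Hypothesis moment_tridiag :
  forall j k : nat, ((j + 2 <= k) || (k + 2 <= j))%N -> moment mu j k = 0.

Lemma mhat_tridiag j k : ((j + 2 <= k) || (k + 2 <= j))%N -> mhat mu j k = 0.
Proof. by move=> far; rewrite /mhat moment_tridiag. Qed.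

Lemma gcoef_band x y : (x + 3 <= y)%N -> gcoef mu x y = 0.
Proof. by move=> far; rewrite /gcoef !mhat_tridiag ?subrr ?mulr0 //; apply/orP; left; lia. Qed.

Lemma gcoef_succ x : gcoef mu x x.+1 = 2 * mhat mu x.+1 x.+1.
Proof. by rewrite /gcoef (@mhat_tridiag x) ?subr0 // addn2 leqnn. Qed.

Lemma gcoef_succ2 x : gcoef mu x x.+2 = 2 * mhat mu x.+1 x.+2.
Proof. by rewrite /gcoef (@mhat_tridiag x) ?subr0 // addn2 leqnSn. Qed.

Lemma gcoef_far a b : ((a + 3 <= b) || (b + 3 <= a))%N -> gcoef mu a b = 0.
Proof.
case/orP=> far; first exact: gcoef_band.
by rewrite gcoef_skew gcoef_band ?oppr0.
Qed.

Lemma gcoef_col_sum (w : nat -> R) N c : (c.+4 < N)%N ->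
  \sum_(a < N) w a * gcoef mu a c.+2 =
  2 * (mhat mu c.+1 c.+2 * w c + mhat mu c.+2 c.+2 * w c.+1
       - mhat mu c.+3 c.+3 * w c.+3 - mhat mu c.+3 c.+4 * w c.+4).
Proof.
move=> le_N; rewrite (@big_ord_support _ _ c 5 (fun a => w a * gcoef mu a c.+2)); last 2 first.
- by lia.
- by move=> a far; rewrite gcoef_far ?mulr0 //; lia.
rewrite !big_ord_recr big_ord0 /= !addSn add0n add0r.
rewrite (gcoef_skew c.+3) (gcoef_skew c.+4) gcoef_diag.
by rewrite !gcoef_succ !gcoef_succ2; ring.
Qed.

Lemma gcoef_col0 (w : nat -> R) N : (3 <= N)%N ->
  \sum_(a < N) w a * gcoef mu a 0 = - (2 * (mhat mu 1 1 * w 1%N + mhat mu 1 2 * w 2%N)).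
Proof.
move=> le_N; rewrite (@big_ord_support _ _ 0 3 (fun a => w a * gcoef mu a 0)); last 2 first.
- by lia.
- by move=> a far; rewrite gcoef_far ?mulr0 //; lia.
rewrite !big_ord_recr big_ord0 /= !addSn add0n add0r gcoef_diag (gcoef_skew 1) (gcoef_skew 2).
by rewrite gcoef_succ gcoef_succ2; ring.
Qed.

Lemma gcoef_col1 (w : nat -> R) N : (4 <= N)%N ->
  \sum_(a < N) w a * gcoef mu a 1 =
  2 * (mhat mu 1 1 * w 0%N - mhat mu 2 2 * w 2%N - mhat mu 2 3 * w 3%N).
Proof.
move=> le_N; rewrite (@big_ord_support _ _ 0 4 (fun a => w a * gcoef mu a 1)); last 2 first.
- by lia.
- by move=> a far; rewrite gcoef_far ?mulr0 //; lia.
rewrite !big_ord_recr big_ord0 /= !addSn add0n add0r gcoef_diag (gcoef_skew 2) (gcoef_skew 3).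
by rewrite !gcoef_succ gcoef_succ2; ring.
Qed.

Lemma DeltaS0 : DeltaS mu 0 = 1.
Proof. exact: pfaffian_nat0. Qed.

Lemma DeltaS1 : DeltaS mu 1 = 2 * mhat mu 1 1.
Proof. by rewrite /DeltaS /Gmat pfaffian_nat1 ?gcoef_succ //; exact: gcoef_skew. Qed.

Lemma DeltaS_rec n : DeltaS mu n.+2 =
  2 * mhat mu n.*2.+3 n.*2.+3 * DeltaS mu n.+1 -
  4 * mhat mu n.*2.+1 n.*2.+2 * mhat mu n.*2.+2 n.*2.+3 * DeltaS mu n.
Proof.
rewrite /DeltaS /Gmat pfaffian_band_rec; [|exact: gcoef_skew | exact: gcoef_band].
by rewrite gcoef_succ !gcoef_succ2; ring.
Qed.

Hypothesis DeltaS_succ_neq0 : forall k : nat, DeltaS mu k.+1 != 0.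

Lemma DeltaS_neq0 k : DeltaS mu k != 0.
Proof. by case: k => [|k]; [rewrite DeltaS0 oner_neq0 | exact: DeltaS_succ_neq0]. Qed.

Lemma Zc1 : Zc mu 1 = mhat mu 1 1.
Proof. by rewrite /Zc /= DeltaS0 DeltaS1 divr1 mulKf ?pnatr_eq0. Qed.

Lemma Zc_neq0 j : Zc mu j != 0.
Proof.
rewrite /Zc mulf_neq0 ?invr_eq0 ?pnatr_eq0 //.
by apply: mulf_neq0; rewrite ?invr_eq0 DeltaS_neq0.
Qed.

Lemma Zc_rec n : Zc mu n.+2 * Zc mu n.+1 =
  mhat mu n.*2.+3 n.*2.+3 * Zc mu n.+1 - mhat mu n.*2.+1 n.*2.+2 * mhat mu n.*2.+2 n.*2.+3.
Proof.
rewrite /Zc /= DeltaS_rec.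
move: (DeltaS_neq0 n.+1) (DeltaS_neq0 n); move: (DeltaS mu n.+1) (DeltaS mu n) => D1 D0 D1_neq0 D0_neq0.
by field; rewrite D1_neq0 D0_neq0.
Qed.

Definition coef_rec (k : nat) (w : nat -> R) := forall j, (1 <= j <= k)%N ->
  Zc mu j * w j.*2.-1 = - (mhat mu j.*2.-1 j.*2 * w j.*2) /\
  Zc mu j * w (j.*2 - 2)%N = mhat mu j.*2 j.*2.+1 * w j.*2.+1 + mhat mu j.*2 j.*2 * w j.*2.

Lemma coef_recS k w j : coef_rec k w -> (j < k)%N ->
  Zc mu j.+1 * w j.*2.+1 = - (mhat mu j.*2.+1 j.*2.+2 * w j.*2.+2) /\
  Zc mu j.+1 * w j.*2 = mhat mu j.*2.+2 j.*2.+3 * w j.*2.+3 + mhat mu j.*2.+2 j.*2.+2 * w j.*2.+2.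
Proof. by move=> rec lt_jk; have := rec j.+1; rewrite doubleS subn2 /=; apply. Qed.

(* Multiplied by [Zc mu i.+1], a column sum becomes a combination of the
   recurrences and of [Zc_rec]. *)
Lemma coef_rec_col_even k w j : coef_rec k w -> (j < k)%N ->
  \sum_(a < k.*2.+2) w a * gcoef mu a j.*2 = 0.
Proof.
move=> rec lt_jk; case: j lt_jk => [|i] lt_ik.
  rewrite gcoef_col0; last by lia.
  by have [+ _] := coef_recS rec lt_ik; rewrite Zc1 => ->; ring.
rewrite doubleS gcoef_col_sum; last by lia.
have [rec1 rec2] := coef_recS rec (ltnW lt_ik); have [rec3 _] := coef_recS rec lt_ik.
rewrite !doubleS in rec3.
set X := (X in 2 * X); suff : Zc mu i.+1 * X = 0.
  by move/eqP; rewrite mulf_eq0 (negbTE (Zc_neq0 _)) => /eqP->; rewrite mulr0.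
have -> : Zc mu i.+1 * X =
    mhat mu i.*2.+1 i.*2.+2 * (Zc mu i.+1 * w i.*2 -
      (mhat mu i.*2.+2 i.*2.+3 * w i.*2.+3 + mhat mu i.*2.+2 i.*2.+2 * w i.*2.+2))
  + mhat mu i.*2.+2 i.*2.+2 * (Zc mu i.+1 * w i.*2.+1 + mhat mu i.*2.+1 i.*2.+2 * w i.*2.+2)
  - Zc mu i.+1 * (Zc mu i.+2 * w i.*2.+3 + mhat mu i.*2.+3 i.*2.+4 * w i.*2.+4)
  + w i.*2.+3 * (Zc mu i.+2 * Zc mu i.+1 -
      (mhat mu i.*2.+3 i.*2.+3 * Zc mu i.+1 - mhat mu i.*2.+1 i.*2.+2 * mhat mu i.*2.+2 i.*2.+3)).
  by rewrite /X; ring.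
by rewrite rec1 rec2 rec3 Zc_rec; ring.
Qed.

Lemma coef_rec_col_odd k w j : coef_rec k w -> (j < k)%N ->
  \sum_(a < k.*2.+2) w a * gcoef mu a j.*2.+1 = 0.
Proof.
move=> rec lt_jk; case: j lt_jk => [|i] lt_ik.
  rewrite gcoef_col1; last by lia.
  by have [_ +] := coef_recS rec lt_ik; rewrite Zc1 => ->; ring.
rewrite doubleS gcoef_col_sum; last by lia.
have [rec1 _] := coef_recS rec (ltnW lt_ik); have [_ rec2] := coef_recS rec lt_ik.
rewrite !doubleS in rec2.
set X := (X in 2 * X); suff : Zc mu i.+1 * X = 0.
  by move/eqP; rewrite mulf_eq0 (negbTE (Zc_neq0 _)) => /eqP->; rewrite mulr0.
have -> : Zc mu i.+1 * X =
    mhat mu i.*2.+2 i.*2.+3 * (Zc mu i.+1 * w i.*2.+1 + mhat mu i.*2.+1 i.*2.+2 * w i.*2.+2)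
  + Zc mu i.+1 * (Zc mu i.+2 * w i.*2.+2 -
      (mhat mu i.*2.+4 i.*2.+4.+1 * w i.*2.+4.+1 + mhat mu i.*2.+4 i.*2.+4 * w i.*2.+4))
  - w i.*2.+2 * (Zc mu i.+2 * Zc mu i.+1 -
      (mhat mu i.*2.+3 i.*2.+3 * Zc mu i.+1 - mhat mu i.*2.+1 i.*2.+2 * mhat mu i.*2.+2 i.*2.+3)).
  by rewrite /X; ring.
by rewrite rec1 rec2 Zc_rec; ring.
Qed.

Lemma coef_rec_col_zero k w : coef_rec k w ->
  forall b, (b < k.*2)%N -> \sum_(a < k.*2.+2) w a * gcoef mu a b = 0.
Proof.
move=> rec b lt_bk; rewrite -(odd_double_half b) -ltn_double in lt_bk *.
case: (odd b) lt_bk => /= lt_bk; [apply: coef_rec_col_odd | apply: coef_rec_col_even] => //; lia.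
Qed.

Lemma coef_rec_eq0 k w : coef_rec k w -> w k.*2 = 0 -> w k.*2.+1 = 0 ->
  forall t, (t <= k.*2.+1)%N -> w t = 0.
Proof.
move=> rec wk0 wk1.
have step j : (j < k)%N -> w j.*2.+2 = 0 -> w j.*2.+3 = 0 -> w j.*2 = 0 /\ w j.*2.+1 = 0.
  move=> lt_jk w2 w3; have [rec1 rec2] := coef_recS rec lt_jk.
  rewrite w2 w3 !mulr0 oppr0 addr0 in rec1 rec2.
  by split; apply/eqP; [move/eqP: rec2 | move/eqP: rec1]; rewrite mulf_eq0 (negbTE (Zc_neq0 _)).
have below i j : (j + i = k)%N -> w j.*2 = 0 /\ w j.*2.+1 = 0.
  elim: i j => [|i IH] j; first by rewrite addn0 => ->.
  move=> e; have [w2 w3] := IH j.+1 ltac:(lia).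
  by apply: step => //; lia.
move=> t le_tk; have [w_even w_odd] := below (k - t./2)%N t./2 ltac:(lia).
by rewrite -[t]odd_double_half; case: (odd t); rewrite ?add0n.
Qed.

Lemma gform_coef_rec_orth k l (c c' : nat -> R) : coef_rec k c -> coef_rec l c' -> k != l ->
  gform mu c c' k.*2.+2 l.*2.+2 = 0.
Proof.
move=> rec_c rec_c'; case: ltngtP => // [lt_kl|lt_lk] _.
  by rewrite gform_skew gform_col_zero ?oppr0 // => b lt_b; apply: coef_rec_col_zero rec_c' _ _; lia.
by rewrite gform_col_zero // => b lt_b; apply: coef_rec_col_zero rec_c _ _; lia.
Qed.

End TridiagonalMoments.

Lemma size_monic_poly_lead1 (F : nzSemiRingType) (f : nat -> F) n : f n = 1 ->
  size (\sum_(i < n.+1) f i *: 'X^i) = n.+1 /\ \sum_(i < n.+1) f i *: 'X^i \is monic.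
Proof.
move=> fn1; have fn_neq0 : f n != 0 by rewrite fn1 oner_neq0.
by rewrite -poly_def size_poly_eq // monicE lead_coef_poly // fn1.
Qed.

Section RealCoefficients.
Variable R : realType.
Variable mu : {measure set (R * R)%type -> \bar R}.

Definition ccoef_rec (k : nat) (f : nat -> R[i]) := forall j, (1 <= j <= k)%N ->
  rC (Zc mu j) * f j.*2.-1 = - rC (mhat mu j.*2.-1 j.*2) * f j.*2 /\
  rC (Zc mu j) * f (j.*2 - 2)%N =
    rC (mhat mu j.*2 j.*2.+1) * f j.*2.+1 + rC (mhat mu j.*2 j.*2) * f j.*2.

Lemma Re_rCM (x : R) (w : R[i]) : complex.Re (rC x * w) = x * complex.Re w.
Proof. by case: w => a b /=; ring. Qed.

Lemma Im_rCM (x : R) (w : R[i]) : complex.Im (rC x * w) = x * complex.Im w.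
Proof. by case: w => a b /=; ring. Qed.

Lemma ccoef_rec_Re k f : ccoef_rec k f -> coef_rec mu k (fun t => complex.Re (f t)).
Proof.
move=> crec j /crec[rec1 rec2]; split.
  by have := congr1 (@complex.Re R) rec1; rewrite -rCN !Re_rCM mulNr.
by have := congr1 (@complex.Re R) rec2; rewrite raddfD /= !Re_rCM.
Qed.

Lemma ccoef_rec_Im k f : ccoef_rec k f -> coef_rec mu k (fun t => complex.Im (f t)).
Proof.
move=> crec j /crec[rec1 rec2]; split.
  by have := congr1 (@complex.Im R) rec1; rewrite -rCN !Im_rCM mulNr.
by have := congr1 (@complex.Im R) rec2; rewrite raddfD /= !Im_rCM.
Qed.

Hypothesis DeltaS_succ_neq0 : forall k : nat, DeltaS mu k.+1 != 0.

Lemma ccoef_rec_real k f : ccoef_rec k f ->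
  complex.Im (f k.*2) = 0 -> complex.Im (f k.*2.+1) = 0 ->
  forall t, (t <= k.*2.+1)%N -> f t = rC (complex.Re (f t)).
Proof.
move=> crec Im0 Im1 t le_t.
have := coef_rec_eq0 DeltaS_succ_neq0 (ccoef_rec_Im crec) Im0 Im1 le_t.
by case: (f t) => a b /= ->.
Qed.

Lemma ccoef_rec_real_poly k f n : ccoef_rec k f ->
  complex.Im (f k.*2) = 0 -> complex.Im (f k.*2.+1) = 0 -> (n <= k.*2.+2)%N ->
  \sum_(i < n) f i *: 'X^i = real_poly (fun t => complex.Re (f t)) n.
Proof.
move=> crec Im0 Im1 le_n; apply: eq_bigr => i _.
by rewrite [in LHS](ccoef_rec_real crec Im0 Im1) //; have := ltn_ord i; lia.
Qed.

End RealCoefficients.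

Theorem theorem4p1 (R : realType) (mu : {measure set (R * R)%type -> \bar R})
  (* finite moments: int |z|^n dmu < oo for all n *)
  (Hmom : forall n : nat,
     mu.-integrable setT (fun p : R * R => ((Num.sqrt (p.1 ^+ 2 + p.2 ^+ 2)) ^+ n)%:E))
  (* tri-diagonal moment matrix *)
  (Htri : forall j k : nat, ((j + 2 <= k) || (k + 2 <= j))%N -> moment mu j k = 0)
  (* Delta_k <> 0 for k >= 0 *)
  (HDelta : forall k : nat, DeltaS mu k.+1 != 0)
  (* alpha k j = alpha_{2k,j},  beta k j = beta_{2k+1,j} *)
  (alpha beta : nat -> nat -> R[i])
  (Ha_top : forall k, alpha k k.*2 = 1)
  (Ha_conv : forall k, alpha k k.*2.+1 = 0)
  (Hb_top : forall k, beta k k.*2.+1 = 1)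
  (Hb_0 : forall k, beta k k.*2 = 0)
  (Hb_1 : forall k, (0 < k)%N -> beta k k.*2.-1 = 0)
  (Ha_rec : forall k j, (1 <= j <= k)%N ->
     rC (Zc mu j) * alpha k j.*2.-1 = - rC (mhat mu j.*2.-1 j.*2) * alpha k j.*2 /\
     rC (Zc mu j) * alpha k (j.*2 - 2)%N =
       rC (mhat mu j.*2 j.*2.+1) * alpha k j.*2.+1 + rC (mhat mu j.*2 j.*2) * alpha k j.*2)
  (Hb_rec : forall k j, (1 <= j <= k)%N ->
     rC (Zc mu j) * beta k j.*2.-1 = - rC (mhat mu j.*2.-1 j.*2) * beta k j.*2 /\
     rC (Zc mu j) * beta k (j.*2 - 2)%N =
       rC (mhat mu j.*2 j.*2.+1) * beta k j.*2.+1 + rC (mhat mu j.*2 j.*2) * beta k j.*2) :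
  let q (n : nat) : {poly R[i]} :=
    if odd n then \sum_(i < n.+1) beta n./2 i *: 'X^i
    else \sum_(i < n.+1) alpha n./2 i *: 'X^i in
  (forall n, size (q n) = n.+1 /\ q n \is monic) /\
  (forall k l, skew_prod mu (q k.*2) (q l.*2) = 0 /\
               skew_prod mu (q k.*2.+1) (q l.*2.+1) = 0) /\
  (exists r : nat -> R[i], forall k l,
     skew_prod mu (q k.*2) (q l.*2.+1) = r k * (k == l)%:R /\
     skew_prod mu (q l.*2.+1) (q k.*2) = - (r k * (k == l)%:R)).
Proof.
move=> q; pose a k t := complex.Re (alpha k t); pose b k t := complex.Re (beta k t).
have recA k : coef_rec mu k (a k) := ccoef_rec_Re (Ha_rec k).
have recB k : coef_rec mu k (b k) := ccoef_rec_Re (Hb_rec k).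
have qA k : q k.*2 = real_poly (a k) k.*2.+2.
  rewrite /q odd_double doubleK -(ccoef_rec_real_poly HDelta (Ha_rec k)) ?Ha_top ?Ha_conv //.
  by rewrite [RHS]big_ord_recr /= Ha_conv scale0r addr0.
have qB k : q k.*2.+1 = real_poly (b k) k.*2.+2.
  rewrite /q /= odd_double uphalf_double.
  by rewrite -(ccoef_rec_real_poly HDelta (Hb_rec k)) ?Hb_top ?Hb_0.
have orth := gform_coef_rec_orth Htri HDelta.
split; [|split].
- move=> n; rewrite /q; have := odd_double_half n.
  case: (odd n) => /= n_eq; apply: size_monic_poly_lead1.
    by rewrite -[in X in beta _ X]n_eq Hb_top.
  by rewrite -[in X in alpha _ X]n_eq Ha_top.
- move=> k l; rewrite !qA !qB !skew_prod_real_poly //.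
  have [<-|nkl] := eqVneq k l; first by rewrite !gform_self.
  by rewrite !orth.
- exists (fun k => rC (gform mu (a k) (b k) k.*2.+2 k.*2.+2)) => k l.
  rewrite qA qB !skew_prod_real_poly //.
  have [<-|nkl] := eqVneq k l; first by rewrite !mulr1 [gform mu (b k) _ _ _]gform_skew rCN.
  by rewrite !mulr0 oppr0 !orth // eq_sym.
Qed.
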